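(* Let $A$ and $B$ be $k$-bialgebras and let $H=A\otimes^\phi_\tau B$ be a bitwisted tensor product, with twisting map $\tau\colon B\otimes A\to A\otimes B$ and cotwisting map $\phi\colon A\otimes B\to B\otimes A$. If $\tau\colon B\otimes^!A\to A\otimes^!B$ and $\phi\colon A\otimes^!B\to B\otimes^!A$ are both continuous, where $A$ and $B$ carry their cofinite topologies, then there is an isomorphism of bialgebras \[H^\circ\cong A^\circ\otimes^{\tau^\circ}_{\phi^\circ}B^\circ.\]
   Context: $k$ is a field (discrete topology). For an algebra $R$, the cofinite topology is the linear topology whose open subspaces are those containing a two-sided ideal of finite codimension; $R^\circ$ is the finite dual (functionals whose kernel contains such an ideal); for a bialgebra $R$, $R^\circ$ is a bialgebra with comultiplication dual to the multiplication and multiplication dual to the comultiplication. For linearly topologized spaces $E,F$, $E\otimes^!F$ is $E\otimes F$ with the linear topology whose open subspaces contain $E_0\otimes F+E\otimes F_0$ for some open subspaces $E_0,F_0$; continuous duals satisfy $(A\otimes^!B)^\circ\cong A^\circ\otimes B^\circ$ for cofinite topologies, so $\tau^\circ$ is a linear map $A^\circ\otimes B^\circ\to B^\circ\otimes A^\circ$ and $\phi^\circ$ a linear map $B^\circ\otimes A^\circ\to A^\circ\otimes B^\circ$. A twisting map $\tau\colon B\otimes A\to A\otimes B$ for algebras is a linear map such that $(m_A\otimes m_B)\circ(\mathrm{id}\otimes\tau\otimes\mathrm{id})$ is an associative multiplication on $A\otimes B$ with unit $1\otimes1$ (algebra $A\otimes_\tau B$); a cotwisting map $\phi\colon C\otimes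 D\to D\otimes C$ for coalgebras is a linear map such that $(\mathrm{id}\otimes\phi\otimes\mathrm{id})\circ(\Delta_C\otimes\Delta_D)$ is a coassociative comultiplication on $C\otimes D$ with counit $\varepsilon_C\otimes\varepsilon_D$ (coalgebra $C\otimes^\phi D$). If $A,B$ are both algebras and coalgebras, $\tau$ a twisting map and $\phi$ a cotwisting map such that $A\otimes_\tau B$ and $A\otimes^\phi B$ together make $A\otimes B$ a bialgebra, this bialgebra is the bitwisted tensor product $A\otimes^\phi_\tau B$. Accordingly $A^\circ\otimes^{\tau^\circ}_{\phi^\circ}B^\circ$ denotes $A^\circ\otimes B^\circ$ with algebra structure $A^\circ\otimes_{\phi^\circ}B^\circ$ and coalgebra structure $A^\circ\otimes^{\tau^\circ}B^\circ$. *)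

From HB Require Import structures.
From mathcomp Require Import all_boot all_order all_algebra.
From mathcomp Require Import boolp classical_sets functions.
From mathcomp Require Import ring.

Set Implicit Arguments.
Unset Strict Implicit.
Unset Printing Implicit Defensive.

Import GRing.Theory.
Local Open Scope ring_scope.

Section Bitwisted.
Variable k : fieldType.

Definition lin (U V : lmodType k) (f : U -> V) : Prop :=
  forall (a : k) x y, f (a *: x + y) = a *: f x + f y.

Definition linf (U : lmodType k) (f : U -> k) : Prop :=
  forall (a : k) x y, f (a *: x + y) = a * f x + f y.

Definition bil (V W : lmodType k) (B : V -> W -> k) : Prop :=
  (forall w, linf (fun v => B v w)) /\ (forall v, linf (B v)).

Definition Bil (V W : lmodType k) := {B : V -> W -> k | bil B}.

Lemma linf0 (U : lmodType k) (f : U -> k) : linf f -> f 0 = 0.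
Proof.
move=> lf; have := lf 1 0 0; rewrite scale1r addr0 mul1r => h.
by apply: (@addrI _ (f 0)); rewrite addr0 -h.
Qed.

Lemma linfZ (U : lmodType k) (f : U -> k) a x : linf f -> f (a *: x) = a * f x.
Proof. by move=> lf; have := lf a x 0; rewrite addr0 linf0 // addr0. Qed.

(* The algebraic tensor product V (x) W of two k-vector spaces.
   An element is represented by the linear functional it induces on the
   space of bilinear forms V x W -> k; the elements are exactly those
   functionals given by finite sums  sum_i v_i (x) w_i.  Over a field
   the canonical map V (x) W -> (Bil V W)^* is injective, so this is
   (isomorphic to) the usual tensor product.                           *)

Definition tsum (V W : lmodType k) (s : seq (V * W)) : Bil V W -> k^o :=
  fun B => \sum_(p <- s) sval B p.1 p.2.

Definition is_tensor (V W : lmodType k) : {pred Bil V W -> k^o} :=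
  fun t => `[< exists s : seq (V * W), t = tsum s >].

Lemma is_tensor_submod_closed (V W : lmodType k) :
  GRing.submod_closed (@is_tensor V W).
Proof.
split.
  apply/asboolP; exists [::]; apply/funext => B.
  by rewrite /tsum big_nil.
move=> a t u /asboolP [s ->] /asboolP [s' ->]; apply/asboolP.
exists ([seq (a *: p.1, p.2) | p <- s] ++ s'); apply/funext => B.
rewrite /tsum big_cat big_map /=; congr (_ + _).
rewrite [LHS]/GRing.scale /= /GRing.scale /= mulr_sumr.
apply: eq_bigr => p _; case: B => B [BV BW] /=.
by rewrite -(linfZ a p.1 (BV p.2)).
Qed.

Record tens (V W : lmodType k) := Tens {
  tval : Bil V W -> k^o;
  tvalP : tval \in @is_tensor V W }.

Section TensInst.
Variables V W : lmodType k.
HB.instance Definition _ := [isSub for @tval V W].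
HB.instance Definition _ := [Choice of tens V W by <:].
HB.instance Definition _ := GRing.isSubmodClosed.Build k (Bil V W -> k^o)
  (@is_tensor V W) (GRing.submod_closed_semi (is_tensor_submod_closed V W)).
HB.instance Definition _ := [SubChoice_isSubLmodule of tens V W by <:].
End TensInst.

Lemma tensP (V W : lmodType k) (t : tens V W) :
  exists s : seq (V * W), tval t = tsum s.
Proof. exact/asboolP/tvalP. Qed.

Definition trep (V W : lmodType k) (t : tens V W) : seq (V * W) :=
  projT1 (cid (tensP t)).

Lemma pure_is_tensor (V W : lmodType k) (v : V) (w : W) :
  tsum [:: (v, w)] \in @is_tensor V W.
Proof. by apply/asboolP; exists [:: (v, w)]. Qed.

Definition tmul (V W : lmodType k) (v : V) (w : W) : tens V W :=
  Tens (pure_is_tensor v w).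

(* The linear map V (x) W -> U induced by a map beta : V -> W -> U
   (used only for bilinear beta, for which it is independent of the
   chosen representation).                                             *)
Definition lift (V W : lmodType k) (U : nmodType) (beta : V -> W -> U)
  (t : tens V W) : U := \sum_(p <- trep t) beta p.1 p.2.

Definition tmap (V W V' W' : lmodType k) (f : V -> V') (g : W -> W')
  : tens V W -> tens V' W' := lift (fun v w => tmul (f v) (g w)).

Definition tassoc (V1 V2 V3 : lmodType k)
  : tens (tens V1 V2) V3 -> tens V1 (tens V2 V3) :=
  lift (fun t w => lift (fun u v => tmul u (tmul v (w : V3))) t).

Record bialg_ops (V : lmodType k) := BialgOps {
  bmul : V -> V -> V;
  bone : V;
  bcomul : V -> tens V V;
  bcounit : V -> k }.

Definition is_algebra (V : lmodType k) (m : V -> V -> V) (u : V) : Prop :=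
  [/\ (forall x, lin (m x)), (forall y, lin (fun x => m x y)),
      (forall x y z, m x (m y z) = m (m x y) z),
      (forall x, m u x = x) & (forall x, m x u = x)].

Definition coassociative (V : lmodType k) (d : V -> tens V V) : Prop :=
  forall c, tassoc (tmap d id (d c)) = tmap id d (d c).

Definition counital (V : lmodType k) (d : V -> tens V V) (e : V -> k) : Prop :=
  (forall c, lift (fun x y => e x *: y) (d c) = c) /\
  (forall c, lift (fun x y => e y *: x) (d c) = c).

Definition is_coalgebra (V : lmodType k) (d : V -> tens V V) (e : V -> k) :=
  [/\ lin d, linf e, coassociative d & counital d e].

Definition tens_alg_mul (V W : lmodType k) (mV : V -> V -> V)
  (mW : W -> W -> W) (s t : tens V W) : tens V W :=
  lift (fun a b => lift (fun a' b' => tmul (mV a a') (mW b b')) t) s.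

Definition is_bialgebra (V : lmodType k) (H : bialg_ops V) : Prop :=
  [/\ is_algebra (bmul H) (bone H),
      is_coalgebra (bcomul H) (bcounit H) &
   [/\ (forall x y, bcomul H (bmul H x y) =
         tens_alg_mul (bmul H) (bmul H) (bcomul H x) (bcomul H y)),
      bcomul H (bone H) = tmul (bone H) (bone H),
      (forall x y, bcounit H (bmul H x y) = bcounit H x * bcounit H y)
    & bcounit H (bone H) = 1]].

Definition bialg_iso (V W : lmodType k) (HV : bialg_ops V) (HW : bialg_ops W)
    (f : V -> W) : Prop :=
  [/\ lin f, bijective f &
   [/\ (forall x y, f (bmul HV x y) = bmul HW (f x) (f y)),
      f (bone HV) = bone HW,
      (forall x, tmap f f (bcomul HV x) = bcomul HW (f x))
    & (forall x, bcounit HW (f x) = bcounit HV x)]].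

(* (m_A (x) m_B) o (id (x) tau (x) id) on (A (x) B) (x) (A (x) B) *)
Definition twisted_mul (A B : lmodType k) (mA : A -> A -> A) (mB : B -> B -> B)
  (tau : tens B A -> tens A B) (s t : tens A B) : tens A B :=
  lift (fun a b => lift (fun a' b' =>
      tmap (mA a) (fun y => mB y b') (tau (tmul b a'))) t) s.

Definition is_twisting (A B : lmodType k) (mA : A -> A -> A) (uA : A)
  (mB : B -> B -> B) (uB : B) (tau : tens B A -> tens A B) : Prop :=
  [/\ lin tau,
      (forall x y z, twisted_mul mA mB tau x (twisted_mul mA mB tau y z) =
                     twisted_mul mA mB tau (twisted_mul mA mB tau x y) z),
      (forall x, twisted_mul mA mB tau (tmul uA uB) x = x)
    & (forall x, twisted_mul mA mB tau x (tmul uA uB) = x)].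

(* (id (x) phi (x) id) o (Delta_A (x) Delta_B) *)
Definition cotwisted_comul (A B : lmodType k) (dA : A -> tens A A)
  (dB : B -> tens B B) (phi : tens A B -> tens B A) (t : tens A B)
  : tens (tens A B) (tens A B) :=
  lift (fun a b => lift (fun a1 a2 => lift (fun b1 b2 =>
      lift (fun (y : B) (x : A) => tmul (tmul a1 y) (tmul x b2))
           (phi (tmul a2 b1))) (dB b)) (dA a)) t.

Definition tcounit (A B : lmodType k) (eA : A -> k) (eB : B -> k)
  : tens A B -> k := lift (fun a b => eA a * eB b).

Definition is_cotwisting (A B : lmodType k) (dA : A -> tens A A) (eA : A -> k)
  (dB : B -> tens B B) (eB : B -> k) (phi : tens A B -> tens B A) : Prop :=
  [/\ lin phi, coassociative (cotwisted_comul dA dB phi)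
    & counital (cotwisted_comul dA dB phi) (tcounit eA eB)].

Definition bitwisted (A B : lmodType k) (HA : bialg_ops A) (HB : bialg_ops B)
  (tau : tens B A -> tens A B) (phi : tens A B -> tens B A)
  : bialg_ops (tens A B) :=
  BialgOps (twisted_mul (bmul HA) (bmul HB) tau) (tmul (bone HA) (bone HB))
           (cotwisted_comul (bcomul HA) (bcomul HB) phi)
           (tcounit (bcounit HA) (bcounit HB)).

Definition subspace (V : lmodType k) (P : V -> Prop) : Prop :=
  P 0 /\ forall (a : k) x y, P x -> P y -> P (a *: x + y).

Definition two_sided_ideal (V : lmodType k) (m : V -> V -> V) (I : V -> Prop) :=
  subspace I /\ forall x y, I y -> I (m x y) /\ I (m y x).

(* finite codimension: V / I embeds linearly into k^n for some n *)
Definition fin_codim (V : lmodType k) (I : V -> Prop) : Prop :=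
  exists n (pi : V -> 'rV[k]_n), lin pi /\ forall x, I x <-> pi x = 0.

Definition cof_ideal (V : lmodType k) (m : V -> V -> V) (I : V -> Prop) :=
  two_sided_ideal m I /\ fin_codim I.

Definition cof_open (V : lmodType k) (m : V -> V -> V) (U : V -> Prop) :=
  subspace U /\ exists I, cof_ideal m I /\ forall x, I x -> U x.

(* the subspace E0 (x) F + E (x) F0 of E (x) F *)
Definition tsubsp (V W : lmodType k) (E0 : V -> Prop) (F0 : W -> Prop)
  (t : tens V W) : Prop :=
  exists s : seq (V * W), t = \sum_(p <- s) tmul p.1 p.2 /\
                          {in s, forall p, E0 p.1 \/ F0 p.2}.

(* open subspaces of E (x)^! F *)
Definition tens_open (V W : lmodType k) (openV : (V -> Prop) -> Prop)
  (openW : (W -> Prop) -> Prop) (U : tens V W -> Prop) : Prop :=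
  subspace U /\ exists E0 F0, [/\ openV E0, openW F0 &
                                  (forall t, tsubsp E0 F0 t -> U t)].

Definition lcontinuous (X Y : Type) (openX : (X -> Prop) -> Prop)
  (openY : (Y -> Prop) -> Prop) (f : X -> Y) : Prop :=
  forall U, openY U -> openX (fun x => U (f x)).

Definition is_findual (V : lmodType k) (m : V -> V -> V) : {pred V -> k^o} :=
  fun f => `[< linf f /\ exists I, cof_ideal m I /\ forall x, I x -> f x = 0 >].

Lemma is_findual_submod_closed (V : lmodType k) (m : V -> V -> V) :
  GRing.submod_closed (is_findual m).
Proof.
split.
  apply/asboolP; split; first by move=> a x y; rewrite mulr0 addr0.
  exists (fun _ => True); split=> //; split.
    split; first by split.
    by [].
  exists 0%N, (fun _ => 0); split; last by [].
  by move=> a x y; rewrite scaler0 addr0.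
move=> a f g /asboolP [lf [I [[[sI iI] [n [pi [lpi hpi]]]] fI]]].
move=> /asboolP [lg [J [[[sJ iJ] [n' [pi' [lpi' hpi']]]] gJ]]].
apply/asboolP; split.
  have E z : (a *: f + g) z = a * f z + g z by [].
  move=> b x y; rewrite !E lf lg; ring.
exists (fun x => I x /\ J x); split; last first.
  move=> x [Ix Jx]; have E : (a *: f + g) x = a * f x + g x by [].
  by rewrite E fI // gJ // mulr0 addr0.
split.
  split.
    split.
      by case: sI; case: sJ.
    move=> b x y [Ix Jx] [Iy Jy]; split.
      by case: sI => _; apply.
    by case: sJ => _; apply.
  move=> x y [Iy Jy]; have [h1 h2] := iI x y Iy; have [h3 h4] := iJ x y Jy.
  by split; split.
exists (n + n')%N, (fun x => row_mx (pi x) (pi' x)); split.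
    by move=> b x y; rewrite lpi lpi' scale_row_mx add_row_mx.
  move=> x; rewrite hpi hpi'; split; first by move=> [-> ->]; rewrite row_mx0.
by move/eqP; rewrite row_mx_eq0 => /andP [/eqP -> /eqP ->].
Qed.

Record findual (V : lmodType k) (m : V -> V -> V) := FinDual {
  fdval : V -> k^o;
  fdvalP : fdval \in is_findual m }.

Section FinDualInst.
Variables (V : lmodType k) (m : V -> V -> V).
HB.instance Definition _ := [isSub for @fdval V m].
HB.instance Definition _ := [Choice of findual m by <:].
HB.instance Definition _ := GRing.isSubmodClosed.Build k (V -> k^o)
  (is_findual m) (GRing.submod_closed_semi (is_findual_submod_closed m)).
HB.instance Definition _ := [SubChoice_isSubLmodule of findual m by <:].
End FinDualInst.

(* pairing of T in V1^* (x) V2^* (represented in V1^o (x) V2^o) with x (x) y *)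
Definition dpair (V1 V2 : lmodType k) (m1 : V1 -> V1 -> V1) (m2 : V2 -> V2 -> V2)
  (T : tens (findual m1) (findual m2)) (x : V1) (y : V2) : k :=
  lift (fun (f : findual m1) (g : findual m2) => fdval f x * fdval g y) T.

Definition dpairT (V1 V2 : lmodType k) (m1 : V1 -> V1 -> V1) (m2 : V2 -> V2 -> V2)
  (T : tens (findual m1) (findual m2)) (u : tens V1 V2) : k :=
  lift (dpair T) u.

(* The bialgebra structure on R^o:  multiplication dual to Delta,
   comultiplication dual to the multiplication, unit eps, counit f |-> f(1). *)
Definition fd_ops (V : lmodType k) (H : bialg_ops V) : bialg_ops (findual (bmul H)) :=
  BialgOps
    (fun f g : findual (bmul H) =>
       insubd 0 (fun x : V => lift (fun x1 x2 => fdval f x1 * fdval g x2)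
                                   (bcomul H x) : k^o))
    (insubd 0 (bcounit H : V -> k^o))
    (fun f : findual (bmul H) =>
       xget 0 (fun T : tens (findual (bmul H)) (findual (bmul H)) =>
                 forall x y, dpair T x y = fdval f (bmul H x y)))
    (fun f : findual (bmul H) => fdval f (bone H)).

Definition dual_twist (A B : lmodType k) (mA : A -> A -> A) (mB : B -> B -> B)
  (tau : tens B A -> tens A B) (T : tens (findual mA) (findual mB))
  : tens (findual mB) (findual mA) :=
  xget 0 (fun S => forall (b : B) (a : A), dpair S b a = dpairT T (tau (tmul b a))).

Definition dual_bitwisted (A B : lmodType k) (HA : bialg_ops A) (HB : bialg_ops B)
  (tau : tens B A -> tens A B) (phi : tens A B -> tens B A)
  : bialg_ops (tens (findual (bmul HA)) (findual (bmul HB))) :=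
  bitwisted (fd_ops HA) (fd_ops HB)
    (dual_twist phi)   (* phi^o : B^o (x) A^o -> A^o (x) B^o *)
    (dual_twist tau).  (* tau^o : A^o (x) B^o -> B^o (x) A^o *)

End Bitwisted.

From HB Require Import structures.
From mathcomp Require Import all_boot all_order all_algebra.
From mathcomp Require Import boolp classical_sets functions.
From mathcomp Require Import ring.

(* Restricting F in H° along the algebra maps a |-> a (x) 1 and b |-> 1 (x) b
   yields cofinite ideals I of A and J of B such that F vanishes on
   I (x) B + A (x) J, so (a, b) |-> F (a (x) b) is a finite sum of products
   f a * g b with f in A°, g in B°; this defines [split_dual] : H° -> A° (x) B°,
   injective because pure tensors span A (x) B.  Conversely, a functional on
   A (x) B vanishing on I (x) B + A (x) J lies in H°: continuity of tau yields
   cofinite ideals I', J' such that H * (I' (x) B + A (x) J) and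
   (I (x) B + A (x) J') * H lie in I (x) B + A (x) J, and a functional whose
   kernel absorbs a finite-codimensional subspace from each side contains a
   cofinite two-sided ideal.  Continuity of tau and phi also makes the
   transposes tau°, phi° exist.  The compatibility of [split_dual] with the
   (co)multiplications is then computed through pairings, which separate the
   points of A° (x) B° since finitely many elements of a finite dual always
   admit a dual basis. *)

Set Implicit Arguments.
Unset Strict Implicit.
Unset Printing Implicit Defensive.
Import GRing.Theory.
Local Open Scope ring_scope.

Section TensorDuality.
Variable k : fieldType.
Implicit Types V W : lmodType k.

Section LinearMaps.
Variables (U V : lmodType k) (f : U -> V).
Hypothesis hf : lin f.

Lemma lin0 : f 0 = 0.
Proof.
have := hf 1 0 0; rewrite !scale1r addr0 => h.
by apply: (@addrI _ (f 0)); rewrite addr0 -h.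
Qed.

Lemma linD x y : f (x + y) = f x + f y.
Proof. by have := hf 1 x y; rewrite !scale1r. Qed.

Lemma linZ a x : f (a *: x) = a *: f x.
Proof. by have := hf a x 0; rewrite !addr0 lin0 addr0. Qed.

Lemma linB x y : f (x - y) = f x - f y.
Proof. by rewrite linD -scaleN1r linZ scaleN1r. Qed.

Lemma lin_sum (I : Type) (r : seq I) (P : pred I) (F : I -> U) :
  f (\sum_(i <- r | P i) F i) = \sum_(i <- r | P i) f (F i).
Proof.
elim: r => [|i r IH]; first by rewrite !big_nil lin0.
by rewrite !big_cons; case: (P i); rewrite ?linD IH.
Qed.

End LinearMaps.

Lemma lin_comp (U V W : lmodType k) (f : V -> W) (g : U -> V) :
  lin f -> lin g -> lin (f \o g).
Proof. by move=> hf hg a x y /=; rewrite hg hf. Qed.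

Lemma lin_mulr (V : lmodType k) (F : V -> k^o) (c : k) :
  lin F -> lin (fun v => F v * c : k^o).
Proof. by move=> hF a x y; rewrite hF /GRing.scale /= mulrDl mulrA. Qed.

Lemma lin_mull (V : lmodType k) (F : V -> k^o) (c : k) :
  lin F -> lin (fun v => c * F v : k^o).
Proof. by move=> hF a x y; rewrite hF /GRing.scale /= mulrDr mulrCA. Qed.

Definition bilin V W (U : lmodType k) (b : V -> W -> U) :=
  (forall w, lin (fun v => b v w)) /\ (forall v, lin (b v)).

Lemma bilin_mul V W (F : V -> k^o) (G : W -> k^o) :
  lin F -> lin G -> bilin (fun v w => F v * G w : k^o).
Proof. by move=> hF hG; split=> [w|v]; [exact: lin_mulr | exact: lin_mull]. Qed.

(* Targets for which [lift b] does not depend on the chosen representation [trep]. *)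
Definition dual_separating (U : lmodType k) :=
  forall u : U, (forall l : U -> k^o, lin l -> l u = 0) -> u = 0.

Lemma dual_separating_scalar : dual_separating k^o.
Proof. by move=> u h; apply: (h id). Qed.

Section Subspaces.
Variables (V : lmodType k) (P : V -> Prop).
Hypothesis hP : subspace P.

Lemma subspace0 : P 0.
Proof. by case: hP. Qed.

Lemma subspaceD x y : P x -> P y -> P (x + y).
Proof. by move=> hx hy; have := (proj2 hP) 1 x y hx hy; rewrite scale1r. Qed.

Lemma subspaceZ a x : P x -> P (a *: x).
Proof. by move=> hx; have := (proj2 hP) a x 0 hx subspace0; rewrite addr0. Qed.

Lemma subspace_sum (J : Type) (r : seq J) (Q : pred J) (F : J -> V) :
  (forall j, Q j -> P (F j)) -> P (\sum_(j <- r | Q j) F j).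
Proof.
move=> h; elim: r => [|j r IH]; first by rewrite big_nil; apply: subspace0.
by rewrite big_cons; case: ifP => // hj; apply: subspaceD => //; apply: h.
Qed.

End Subspaces.

Lemma subspace_zero : subspace (fun z : k^o => z = 0).
Proof. by split=> // a x y -> ->; rewrite scaler0 addr0. Qed.

Lemma subspace_kernels (V : lmodType k) (I : Type) (l : I -> V -> k^o) :
  (forall i, lin (l i)) -> subspace (fun x => forall i, l i x = 0).
Proof.
move=> hl; split=> [i|a x y hx hy i]; first exact: lin0.
by rewrite hl hx hy scaler0 addr0.
Qed.

Lemma fin_codim_kernels (V : lmodType k) (I : finType) (l : I -> V -> k^o) :
  (forall i, lin (l i)) -> fin_codim (fun x => forall i, l i x = 0).
Proof.
move=> hl; exists #|I|, (fun x => \row_(j < #|I|) l (enum_val j) x); split.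
  by move=> a x y; apply/rowP => j; rewrite !mxE hl.
move=> x; split=> [h|/rowP h i]; first by apply/rowP => j; rewrite !mxE h.
by have := h (enum_rank i); rewrite !mxE enum_rankK.
Qed.

Lemma rowmap_coordinates (V : lmodType k) n (pi : V -> 'rV[k]_n) : lin pi ->
  exists (r : nat) (xs : 'I_r -> V) (al : 'I_r -> V -> k^o),
   [/\ (forall j, lin (al j)), (forall j x, pi x = 0 -> al j x = 0) &
       (forall x, pi x = \sum_j al j x *: pi (xs j))].
Proof.
move=> hpi.
pose M (s : seq V) : 'M[k]_(size s, n) :=
  \matrix_(i < size s, j < n) pi (nth 0 s i) 0 j.
have rowM s (i : 'I_(size s)) : row i (M s) = pi (nth 0 s i).
  by apply/rowP => j; rewrite !mxE.
pose P (m : nat) : bool := `[< exists s, \rank (M s) = m >].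
have P0 : exists m, P m by exists (\rank (M [::])); apply/asboolP; exists [::].
have Pb m : P m -> (m <= n)%N by move=> /asboolP [s <-]; apply: rank_leq_col.
(* the rows of a sequence [s] of maximal rank span the whole image of [pi] *)
case: (ex_maxnP P0 Pb) => m0 /asboolP [s Hs] Hmax.
have sub x : (pi x <= M s)%MS.
  pose s' := x :: s.
  have Ms : (M s <= M s')%MS.
    apply/row_subP => i.
    have -> : row i (M s) = row (fintype.lift ord0 i : 'I_(size s')) (M s').
      by rewrite !rowM.
    exact: row_sub.
  have := mxrank_leqif_sup Ms; case=> _ /esym.
  rewrite Hs; have -> : \rank (M s') = m0.
    apply/eqP; rewrite eqn_leq; apply/andP; split.
      by apply: Hmax; apply/asboolP; exists s'.
    by rewrite -Hs; apply: mxrankS.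
  rewrite eqxx => Ms'.
  have := row_sub (ord0 : 'I_(size s')) (M s'); rewrite rowM /= => px.
  exact: submx_trans px Ms'.
pose al (j : 'I_(size s)) (x : V) : k^o := (pi x *m pinvmx (M s)) 0 j.
exists (size s), (fun j => nth 0 s j), al; split.
- by move=> j a x y; rewrite /al hpi mulmxDl -scalemxAl !mxE.
- by move=> j x h; rewrite /al h mul0mx mxE.
- move=> x; rewrite -{1}(mulmxKpV (sub x)) mulmx_sum_row.
  by apply: eq_bigr => j _; rewrite rowM.
Qed.


Lemma tens_ext V W (t u : tens V W) : (forall B, tval t B = tval u B) -> t = u.
Proof. by move=> h; apply: val_inj; apply/funext. Qed.

Lemma tvalD V W (t u : tens V W) B : tval (t + u) B = tval t B + tval u B.
Proof. by []. Qed.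

Lemma tvalZ V W a (t : tens V W) B : tval (a *: t) B = a * tval t B.
Proof. by []. Qed.

Lemma tval_tmul V W (v : V) (w : W) B : tval (tmul v w) B = sval B v w.
Proof. by rewrite /= /tsum big_seq1. Qed.

Lemma tval_sum V W (I : Type) (r : seq I) (F : I -> tens V W) B :
  tval (\sum_(i <- r) F i) B = \sum_(i <- r) tval (F i) B.
Proof. by elim: r => [|i r IH]; rewrite ?big_nil ?big_cons // tvalD IH. Qed.

Definition tsum_pure V W (s : seq (V * W)) : tens V W :=
  \sum_(p <- s) tmul p.1 p.2.

Lemma tval_tsum_pure V W (s : seq (V * W)) B :
  tval (tsum_pure s) B = \sum_(p <- s) sval B p.1 p.2.
Proof. by rewrite tval_sum; apply: eq_bigr => p _; rewrite tval_tmul. Qed.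

Lemma trepE V W (t : tens V W) : t = tsum_pure (trep t).
Proof. by apply: tens_ext => B; rewrite tval_tsum_pure /trep; case: cid => s /= ->. Qed.

Lemma dual_separating_tens V W : dual_separating (tens V W).
Proof. by move=> u h; apply: tens_ext => B; exact: (h (fun t => tval t B)). Qed.

Lemma bilin_tmul V W : bilin (@tmul k V W).
Proof.
split=> [w a x y|v a x y]; apply: tens_ext => B; rewrite tvalD tvalZ !tval_tmul;
  case: B => B [h1 h2] /=; [exact: h1 | exact: h2].
Qed.

Lemma tmulZl V W a (v : V) (w : W) : tmul (a *: v) w = a *: tmul v w.
Proof. exact: (linZ ((proj1 (bilin_tmul V W)) w)). Qed.

Lemma tmulZr V W a (v : V) (w : W) : tmul v (a *: w) = a *: tmul v w.
Proof. exact: (linZ ((proj2 (bilin_tmul V W)) v)). Qed.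

Lemma tmul_suml V W (I : Type) (r : seq I) (F : I -> V) (w : W) :
  tmul (\sum_(i <- r) F i) w = \sum_(i <- r) tmul (F i) w.
Proof. exact: (lin_sum ((proj1 (bilin_tmul V W)) w)). Qed.

Lemma tmul_sumr V W (I : Type) (r : seq I) (v : V) (F : I -> W) :
  tmul v (\sum_(i <- r) F i) = \sum_(i <- r) tmul v (F i).
Proof. exact: (lin_sum ((proj2 (bilin_tmul V W)) v)). Qed.

Lemma tens_ind V W (U : lmodType k) (P : U -> Prop) (Phi : tens V W -> U) :
  subspace P -> lin Phi -> (forall v w, P (Phi (tmul v w))) -> forall u, P (Phi u).
Proof.
move=> sP hPhi h u; rewrite (trepE u) /tsum_pure (lin_sum hPhi).
by apply: subspace_sum => // p; apply: h.
Qed.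


Section Lift.

Lemma eq_lift V W (U : nmodType) (b b' : V -> W -> U) t :
  (forall v w, b v w = b' v w) -> lift b t = lift b' t.
Proof. by move=> h; apply: eq_bigr => p _; rewrite h. Qed.

Lemma linear_lift V W (U U' : lmodType k) (b : V -> W -> U) (F : U -> U') t :
  lin F -> lift (fun v w => F (b v w)) t = F (lift b t).
Proof. by move=> hF; rewrite /lift (lin_sum hF). Qed.

Lemma lift_sum V W (U : nmodType) (J : Type) (r : seq J) (F : J -> V -> W -> U) t :
  lift (fun v w => \sum_(j <- r) F j v w) t = \sum_(j <- r) lift (F j) t.
Proof. by rewrite /lift exchange_big. Qed.

Lemma exchange_lift V W V' W' (U : nmodType) (b : V -> W -> V' -> W' -> U) t t' :
  lift (fun v w => lift (fun v' w' => b v w v' w') t') t =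
  lift (fun v' w' => lift (fun v w => b v w v' w') t) t'.
Proof. by rewrite /lift exchange_big. Qed.

Lemma lift_mull V W (b : V -> W -> k) (c : k) t :
  lift (fun v w => c * b v w) t = c * lift b t.
Proof. by rewrite /lift mulr_sumr. Qed.

Lemma lift0 V W (U : nmodType) t : lift (fun (v : V) (w : W) => (0 : U)) t = 0.
Proof. by rewrite /lift big1. Qed.

Lemma lift_lin_param V W (P U : lmodType k) (b : P -> V -> W -> U) t :
  (forall v w, lin (fun p => b p v w)) -> lin (fun p => lift (b p) t).
Proof.
move=> hb a p q; rewrite /lift scaler_sumr -big_split /=.
by apply: eq_bigr => x _; rewrite hb.
Qed.

Variables (V W U : lmodType k) (b : V -> W -> U).
Hypotheses (hb : bilin b) (hU : dual_separating U).

(* Each linear functional turns [b] into a bilinear form, i.e. an element of [Bil V W]. *)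
Lemma lift_tsum_pure s t : t = tsum_pure s -> lift b t = \sum_(p <- s) b p.1 p.2.
Proof.
move=> ->; rewrite /lift; set s' := trep _.
have e : tsum_pure s' = tsum_pure s by rewrite -trepE.
apply/eqP; rewrite -subr_eq0; apply/eqP; apply: hU => l hl.
rewrite (linB hl) !(lin_sum hl) /=.
have bl : bil (fun v w => l (b v w)).
  split=> [w|v] a x y; rewrite ?(proj1 hb) ?(proj2 hb) (hl a); by [].
have := congr1 (fun t => tval t (exist _ _ bl)) e.
by rewrite !tval_tsum_pure /= => ->; rewrite subrr.
Qed.

Lemma lift_tmul v w : lift b (tmul v w) = b v w.
Proof.
rewrite (@lift_tsum_pure [:: (v, w)]) ?big_seq1 //.
by apply: tens_ext => B; rewrite tval_tsum_pure big_seq1 tval_tmul.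
Qed.

Lemma lift_lin : lin (lift b).
Proof.
move=> a t u.
rewrite (@lift_tsum_pure ([seq (a *: p.1, p.2) | p <- trep t] ++ trep u)).
  rewrite big_cat big_map /lift scaler_sumr; congr (_ + _).
  by apply: eq_bigr => p _; rewrite (linZ (proj1 hb p.2)).
apply: tens_ext => B; rewrite tval_tsum_pure big_cat big_map tvalD tvalZ.
rewrite {1}(trepE t) {1}(trepE u) !tval_tsum_pure mulr_sumr; congr (_ + _).
apply: eq_bigr => p _; case: B => B [BV BW] /=.
by rewrite -(linfZ a p.1 (BV p.2)).
Qed.

Lemma lift_lift V' W' (g : V' -> W' -> tens V W) t :
  lift b (lift g t) = lift (fun v w => lift b (g v w)) t.
Proof. by rewrite (linear_lift _ _ lift_lin). Qed.

End Lift.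

Lemma lift_tmul_scalar V W (b : V -> W -> k^o) v w :
  bilin b -> lift b (tmul v w) = b v w.
Proof. by move=> hb; exact: lift_tmul hb dual_separating_scalar v w. Qed.

Lemma lift_lin_scalar V W (b : V -> W -> k^o) :
  bilin b -> lin (fun t => lift b t : k^o).
Proof. by move=> hb; exact: lift_lin hb dual_separating_scalar. Qed.

Lemma lift_lift_scalar V W V' W' (b : V' -> W' -> k^o) (g : V -> W -> tens V' W') t :
  bilin b -> lift b (lift g t) = lift (fun v w => lift b (g v w)) t.
Proof. by move=> hb; rewrite (lift_lift hb dual_separating_scalar). Qed.

Lemma bilin_tmul_map V W V' W' (f : V -> V') (g : W -> W') :
  lin f -> lin g -> bilin (fun v w => tmul (f v) (g w)).
Proof.
move=> hf hg; have [h1 h2] := bilin_tmul V' W'.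
by split=> [w|v]; [exact: lin_comp (h1 (g w)) hf | exact: lin_comp (h2 (f v)) hg].
Qed.

Section TensorMaps.
Variables (V W V' W' : lmodType k) (f : V -> V') (g : W -> W').
Hypotheses (hf : lin f) (hg : lin g).

Lemma tmap_tmul v w : tmap f g (tmul v w) = tmul (f v) (g w).
Proof. exact: lift_tmul (bilin_tmul_map hf hg) (@dual_separating_tens _ _) v w. Qed.

Lemma tmap_lin : lin (tmap f g).
Proof. exact: lift_lin (bilin_tmul_map hf hg) (@dual_separating_tens _ _). Qed.

End TensorMaps.

Lemma tmap_id V W (f : V -> V) (g : W -> W) t :
  (forall v, f v = v) -> (forall w, g w = w) -> tmap f g t = t.
Proof.
move=> hf hg; rewrite /tmap /lift [RHS]trepE /tsum_pure.
by apply: eq_bigr => p _; rewrite hf hg.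
Qed.

Section FiniteDual.
Variables (V : lmodType k) (m : V -> V -> V).

Lemma findual_ext (f g : findual m) : (forall x, fdval f x = fdval g x) -> f = g.
Proof. by move=> h; apply: val_inj; apply/funext. Qed.

Lemma fdvalD (f g : findual m) x : fdval (f + g) x = fdval f x + fdval g x.
Proof. by []. Qed.

Lemma fdvalZ a (f : findual m) x : fdval (a *: f) x = a * fdval f x.
Proof. by []. Qed.

Lemma fdval_sum (I : Type) (r : seq I) (F : I -> findual m) x :
  fdval (\sum_(i <- r) F i) x = \sum_(i <- r) fdval (F i) x.
Proof. by elim: r => [|i r IH]; rewrite ?big_nil ?big_cons // fdvalD IH. Qed.

Lemma fdval_lin (f : findual m) : lin (fdval f).
Proof. by case: f => f /= /asboolP []. Qed.

Lemma fdval_vanishing (f : findual m) :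
  exists I, cof_ideal m I /\ forall x, I x -> fdval f x = 0.
Proof. by case: f => f /= /asboolP []. Qed.

Lemma findualP (f : V -> k^o) : lin f ->
  (exists I, cof_ideal m I /\ forall x, I x -> f x = 0) -> f \in is_findual m.
Proof. by move=> h1 h2; apply/asboolP. Qed.

Lemma fdval_lift V' W' (F : findual m) (b : V' -> W' -> V) t :
  fdval F (lift b t) = lift (fun v w => fdval F (b v w)) t.
Proof. by rewrite (linear_lift _ _ (fdval_lin F)). Qed.

Lemma cof_idealI I J :
  cof_ideal m I -> cof_ideal m J -> cof_ideal m (fun x => I x /\ J x).
Proof.
move=> [[[I0 sI] iI] [n [pi [lpi hpi]]]] [[[J0 sJ] iJ] [n' [pi' [lpi' hpi']]]].
split; first split.
- by split=> // a x y [Ix Jx] [Iy Jy]; split; [exact: sI | exact: sJ].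
- move=> x y [Iy Jy]; have [h1 h2] := iI x y Iy; have [h3 h4] := iJ x y Jy.
  by split; split.
exists (n + n')%N, (fun x => row_mx (pi x) (pi' x)); split.
  by move=> b x y; rewrite lpi lpi' scale_row_mx add_row_mx.
move=> x; rewrite hpi hpi'; split; first by move=> [-> ->]; rewrite row_mx0.
by move/eqP; rewrite row_mx_eq0 => /andP [/eqP -> /eqP ->].
Qed.

Lemma cof_idealT : cof_ideal m (fun _ => True).
Proof.
split; first by split.
by exists 0%N, (fun _ => 0); split=> // a x y; rewrite scaler0 addr0.
Qed.

Lemma findual_common_ideal (fs : seq (findual m)) :
  exists I, cof_ideal m I /\ forall f, f \in fs -> forall x, I x -> fdval f x = 0.
Proof.
elim: fs => [|f fs [I [hI h]]].
  by exists (fun _ => True); split => //; apply: cof_idealT.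
have [J [hJ hf]] := fdval_vanishing f.
exists (fun x => I x /\ J x); split; first exact: cof_idealI.
move=> g; rewrite inE => /orP [/eqP -> x [_ Jx]|gfs x [Ix _]]; first exact: hf.
exact: h.
Qed.

Lemma cof_ideal_coordinates I : cof_ideal m I ->
  exists (r : nat) (xs : 'I_r -> V) (al : 'I_r -> findual m),
    (forall j x, I x -> fdval (al j) x = 0) /\
    forall x, I (x - \sum_j fdval (al j) x *: xs j).
Proof.
move=> [[sI iI] [n [pi [lpi hpi]]]].
have [r [xs [al [hl hv hd]]]] := rowmap_coordinates lpi.
have mem j : al j \in is_findual m.
  apply: findualP; first exact: hl.
  exists I; split; first by split; [split | exists n, pi].
  by move=> x /hpi; apply: hv.
exists r, xs, (fun j => FinDual (mem j)); split; first by move=> j x /hpi /= /hv.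
move=> x /=; apply/hpi; rewrite (linB lpi) (lin_sum lpi) hd.
by apply/eqP; rewrite subr_eq0; apply/eqP/eq_bigr => j _; rewrite (linZ lpi).
Qed.

End FiniteDual.

Lemma vanishing_expand (V : lmodType k) (I : V -> Prop) (f : V -> k^o) r
    (xs : 'I_r -> V) (al : 'I_r -> V -> k) x :
  lin f -> (forall y, I y -> f y = 0) -> I (x - \sum_j al j x *: xs j) ->
  f x = \sum_j al j x * f (xs j).
Proof.
move=> hf hv hI; have := hv _ hI; rewrite (linB hf) (lin_sum hf) => /eqP.
by rewrite subr_eq0 => /eqP ->; apply: eq_bigr => j _; exact: (linZ hf).
Qed.

Lemma cof_ideal_preim (V W : lmodType k) (mV : V -> V -> V) (mW : W -> W -> W)
    (f : V -> W) K :
  lin f -> (forall x y, f (mV x y) = mW (f x) (f y)) ->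
  cof_ideal mW K -> cof_ideal mV (fun x => K (f x)).
Proof.
move=> hf hm [[[K0 sK] iK] [n [pi [lpi hpi]]]]; split; first split.
- by split=> [|a x y hx hy]; rewrite ?(lin0 hf) // hf; apply: sK.
- by move=> x y hy; rewrite !hm; apply: iK.
by exists n, (pi \o f); split=> [|x]; [exact: lin_comp | exact: hpi].
Qed.

Lemma cof_open_ideal (V : lmodType k) (m : V -> V -> V) I :
  cof_ideal m I -> cof_open m I.
Proof. by move=> hI; split; [case: hI => [[]] | exists I]. Qed.

Definition local_dual_bases (V : lmodType k) (X : Type) (ev : V -> X -> k) :=
  forall fs : seq V, exists (I : finType) (xs : I -> X) (al : I -> V),
    forall f, f \in fs -> f = \sum_i ev f (xs i) *: al i.

Lemma local_dual_bases_inj (V : lmodType k) X (ev : V -> X -> k) (f g : V) :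
  local_dual_bases ev -> (forall x, ev f x = ev g x) -> f = g.
Proof.
move=> hL h; have [I [xs [al hd]]] := hL [:: f; g].
rewrite (hd f) ?inE ?eqxx // (hd g) ?inE ?eqxx ?orbT //.
by apply: eq_bigr => i _; rewrite h.
Qed.

Lemma findual_local_dual_bases (V : lmodType k) (m : V -> V -> V) :
  local_dual_bases (fun (f : findual m) x => fdval f x).
Proof.
move=> fs; have [I [hI hv]] := findual_common_ideal fs.
have [r [xs [al [_ hd]]]] := cof_ideal_coordinates hI.
exists 'I_r, xs, al => f hf; apply: findual_ext => x.
rewrite fdval_sum (@vanishing_expand _ _ _ _ xs (fun j y => fdval (al j) y) x
  (fdval_lin f) (hv f hf) (hd x)).
by apply: eq_bigr => j _; rewrite fdvalZ mulrC.
Qed.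

Definition lin_pairing (V : lmodType k) X (e : V -> X -> k) :=
  forall x, lin (fun f => e f x : k^o).

Definition tens_pairing V W X Y (e1 : V -> X -> k) (e2 : W -> Y -> k)
  (T : tens V W) (xy : X * Y) : k :=
  lift (fun f g => e1 f xy.1 * e2 g xy.2 : k^o) T.

Section TensorPairing.
Variables (V W : lmodType k) (X Y : Type) (e1 : V -> X -> k) (e2 : W -> Y -> k).

Lemma tens_pairing_local_dual_bases :
  local_dual_bases e1 -> local_dual_bases e2 ->
  local_dual_bases (tens_pairing e1 e2).
Proof.
move=> h1 h2 Ts.
have [I [xs [al hd1]]] := h1 (flatten [seq [seq p.1 | p <- trep T] | T <- Ts]).
have [J [ys [be hd2]]] := h2 (flatten [seq [seq p.2 | p <- trep T] | T <- Ts]).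
exists (I * J)%type, (fun ij => (xs ij.1, ys ij.2)),
  (fun ij => tmul (al ij.1) (be ij.2)) => T hT.
rewrite {1}(trepE T) /tsum_pure /tens_pairing /lift.
have -> : \sum_(p <- trep T) tmul p.1 p.2 =
  \sum_(p <- trep T) \sum_(ij : I * J)
     (e1 p.1 (xs ij.1) * e2 p.2 (ys ij.2)) *: tmul (al ij.1) (be ij.2).
  rewrite big_seq_cond [RHS]big_seq_cond; apply: eq_bigr => p /andP [hp _].
  rewrite {1}(hd1 p.1); last by apply/flattenP; exists [seq p.1 | p <- trep T];
    apply: map_f.
  rewrite {1}(hd2 p.2); last by apply/flattenP; exists [seq p.2 | p <- trep T];
    apply: map_f.
  rewrite tmul_suml.
  under eq_bigr => i _ do rewrite tmulZl tmul_sumr scaler_sumr.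
  by rewrite pair_bigA /=; apply: eq_bigr => ij _; rewrite tmulZr scalerA.
by rewrite exchange_big /=; apply: eq_bigr => ij _; rewrite scaler_suml.
Qed.

Hypotheses (h1 : lin_pairing e1) (h2 : lin_pairing e2).

Lemma tens_pairing_tmul f g xy :
  tens_pairing e1 e2 (tmul f g) xy = e1 f xy.1 * e2 g xy.2.
Proof. by apply: lift_tmul_scalar; apply: bilin_mul. Qed.

Lemma tens_pairing_lin : lin_pairing (tens_pairing e1 e2).
Proof. by move=> xy; apply: lift_lin_scalar; apply: bilin_mul. Qed.

Lemma tens_pairing_lift V' W' (b : V' -> W' -> tens V W) t xy :
  tens_pairing e1 e2 (lift b t) xy = lift (fun v w => tens_pairing e1 e2 (b v w) xy) t.
Proof. by rewrite (linear_lift _ _ (tens_pairing_lin xy)). Qed.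

End TensorPairing.

Definition fd_eval (V : lmodType k) (m : V -> V -> V) (f : findual m) (x : V) : k :=
  fdval f x.

Lemma fd_eval_lin V (m : V -> V -> V) : lin_pairing (@fd_eval V m).
Proof. by []. Qed.

Section DualPairing.
Variables (V1 V2 : lmodType k) (m1 : V1 -> V1 -> V1) (m2 : V2 -> V2 -> V2).
Implicit Types T : tens (findual m1) (findual m2).

Lemma dpairE T x y : dpair T x y = tens_pairing (@fd_eval V1 m1) (@fd_eval V2 m2) T (x, y).
Proof. by []. Qed.

Lemma dpair_tmul (f : findual m1) (g : findual m2) x y :
  dpair (tmul f g) x y = fdval f x * fdval g y.
Proof. by rewrite dpairE tens_pairing_tmul. Qed.

Lemma dpair_lin x y : lin (fun T => dpair T x y : k^o).
Proof. exact: tens_pairing_lin (x, y). Qed.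

Lemma dpair_lift V W (b : V -> W -> tens (findual m1) (findual m2)) t x y :
  dpair (lift b t) x y = lift (fun v w => dpair (b v w) x y) t.
Proof. by rewrite !dpairE tens_pairing_lift. Qed.

Lemma dpair_inj S T : (forall x y, dpair S x y = dpair T x y) -> S = T.
Proof.
move=> h.
apply: (local_dual_bases_inj (ev := tens_pairing (@fd_eval V1 m1) (@fd_eval V2 m2))).
  by apply: tens_pairing_local_dual_bases; apply: findual_local_dual_bases.
by case=> x y; rewrite -!dpairE.
Qed.

Lemma dpair_vanishing T : exists I J,
  [/\ cof_ideal m1 I, cof_ideal m2 J & forall a b, I a \/ J b -> dpair T a b = 0].
Proof.
have [I [hI hvI]] := findual_common_ideal [seq p.1 | p <- trep T].
have [J [hJ hvJ]] := findual_common_ideal [seq p.2 | p <- trep T].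
exists I, J; split=> // a b hab; rewrite /dpair /lift big_seq big1 // => p hp.
case: hab => [ha|hb]; first by rewrite (hvI p.1) ?mul0r //; apply: map_f.
by rewrite (hvJ p.2) ?mulr0 //; apply: map_f.
Qed.

Lemma bilin_dpair T : bilin (fun x y => dpair T x y : k^o).
Proof.
by split=> [w|v]; apply: lift_lin_param => f g; [exact: lin_mulr (fdval_lin f) |
  exact: lin_mull (fdval_lin g)].
Qed.

Lemma dpairT_tmul T x y : dpairT T (tmul x y) = dpair T x y.
Proof. exact: lift_tmul_scalar (bilin_dpair T). Qed.

Lemma dpairT_lin T : lin (fun u => dpairT T u : k^o).
Proof. exact: lift_lin_scalar (bilin_dpair T). Qed.

Lemma dpair_represent (b : V1 -> V2 -> k^o) I J :
  bilin b -> cof_ideal m1 I -> cof_ideal m2 J ->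
  (forall x y, I x -> b x y = 0) -> (forall x y, J y -> b x y = 0) ->
  exists T, forall x y, dpair T x y = b x y.
Proof.
move=> [hb1 hb2] hI hJ v1 v2.
have [r [xs [al [_ hd]]]] := cof_ideal_coordinates hI.
have [r' [ys [be [_ hd']]]] := cof_ideal_coordinates hJ.
exists (\sum_i \sum_j (b (xs i) (ys j) : k) *: tmul (al i) (be j)) => x y.
rewrite (lin_sum (dpair_lin _ _)).
rewrite (@vanishing_expand _ I (fun x => b x y) _ xs (fun j v => fdval (al j) v) x
  (hb1 y) (fun z hz => v1 z y hz) (hd x)).
apply: eq_bigr => i _.
rewrite (@vanishing_expand _ J (b (xs i)) _ ys (fun j v => fdval (be j) v) y
  (hb2 _) (fun z hz => v2 _ z hz) (hd' y)).
rewrite (lin_sum (dpair_lin _ _)) mulr_sumr; apply: eq_bigr => j _.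
by rewrite (linZ (dpair_lin _ _)) dpair_tmul /GRing.scale /=; ring.
Qed.

End DualPairing.

Section TensorSubspace.
Variables (V W : lmodType k) (E0 : V -> Prop) (F0 : W -> Prop).

Lemma tsubsp_tmul v w : E0 v \/ F0 w -> tsubsp E0 F0 (tmul v w).
Proof.
move=> h; exists [:: (v, w)]; split; first by rewrite big_seq1.
by move=> p; rewrite inE => /eqP ->.
Qed.

Lemma tsubsp0 : tsubsp E0 F0 0.
Proof. by exists [::]; split; [rewrite big_nil | move=> p]. Qed.

Lemma tsubspD t u : tsubsp E0 F0 t -> tsubsp E0 F0 u -> tsubsp E0 F0 (t + u).
Proof.
move=> [s [-> hs]] [s' [-> hs']]; exists (s ++ s'); split; first by rewrite big_cat.
by move=> p; rewrite mem_cat => /orP [/hs|/hs'].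
Qed.

Lemma tsubsp_sum (J : Type) (r : seq J) (P : pred J) (F : J -> tens V W) :
  (forall j, P j -> tsubsp E0 F0 (F j)) -> tsubsp E0 F0 (\sum_(j <- r | P j) F j).
Proof.
move=> h; elim: r => [|j r IH]; first by rewrite big_nil; apply: tsubsp0.
by rewrite big_cons; case: ifP => // hj; apply: tsubspD => //; apply: h.
Qed.

Lemma tsubsp_ind (U : lmodType k) (P : U -> Prop) (Phi : tens V W -> U) t :
  subspace P -> lin Phi -> (forall v w, E0 v \/ F0 w -> P (Phi (tmul v w))) ->
  tsubsp E0 F0 t -> P (Phi t).
Proof.
move=> sP hPhi h [s [-> hs]]; rewrite (lin_sum hPhi) big_seq.
by apply: subspace_sum => // p /hs; apply: h.
Qed.

Lemma tsubsp_subspace : subspace E0 -> subspace F0 -> subspace (tsubsp E0 F0).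
Proof.
move=> sE sF; split=> [|a x y [s [-> hs]] hy]; first exact: tsubsp0.
apply: tsubspD => //; rewrite scaler_sumr big_seq; apply: tsubsp_sum => p hp.
case: (hs p hp) => h.
  by rewrite -tmulZl; apply: tsubsp_tmul; left; apply: subspaceZ.
by rewrite -tmulZr; apply: tsubsp_tmul; right; apply: subspaceZ.
Qed.

End TensorSubspace.

Section TensorSubspaceMap.
Variables (V W V' W' : lmodType k) (f : V -> V') (g : W -> W').
Variables (E1 : V' -> Prop) (F1 : W' -> Prop).

Lemma tsubsp_tmap (E0 : V -> Prop) (F0 : W -> Prop) t :
  lin f -> lin g -> (forall v, E0 v -> E1 (f v)) -> (forall w, F0 w -> F1 (g w)) ->
  tsubsp E0 F0 t -> tsubsp E1 F1 (tmap f g t).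
Proof.
move=> hf hg h1 h2 [s [-> hs]].
rewrite (lin_sum (tmap_lin hf hg)) big_seq; apply: tsubsp_sum => p hp.
rewrite tmap_tmul //; apply: tsubsp_tmul.
by case: (hs p hp) => [/h1|/h2]; [left|right].
Qed.

Lemma tsubsp_tmapl t : (forall v, E1 (f v)) -> tsubsp E1 F1 (tmap f g t).
Proof. by move=> h; apply: tsubsp_sum => p _; apply: tsubsp_tmul; left. Qed.

Lemma tsubsp_tmapr t : (forall w, F1 (g w)) -> tsubsp E1 F1 (tmap f g t).
Proof. by move=> h; apply: tsubsp_sum => p _; apply: tsubsp_tmul; right. Qed.

End TensorSubspaceMap.

Lemma tsubsp_coordinates V W (I : V -> Prop) (J : W -> Prop) (T1 T2 : finType)
    (xs : T1 -> V) (al : T1 -> V -> k^o) (ys : T2 -> W) (be : T2 -> W -> k^o) :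
  subspace I -> subspace J -> (forall i, lin (al i)) -> (forall j, lin (be j)) ->
  (forall x, I (x - \sum_i al i x *: xs i)) -> (forall y, J (y - \sum_j be j y *: ys j)) ->
  forall u, tsubsp I J (u - \sum_(q : T1 * T2)
     (lift (fun a b => al q.1 a * be q.2 b) u : k) *: tmul (xs q.1) (ys q.2)).
Proof.
move=> sI sJ hal hbe hdI hdJ.
have bl (q : T1 * T2) : bilin (fun a b => al q.1 a * be q.2 b : k^o).
  exact: bilin_mul (hal q.1) (hbe q.2).
have hS : lin (fun u : tens V W => \sum_(q : T1 * T2)
    (lift (fun a b => al q.1 a * be q.2 b) u : k) *: tmul (xs q.1) (ys q.2)).
  move=> a x y; rewrite scaler_sumr -big_split /=; apply: eq_bigr => q _.
  by rewrite (lift_lin_scalar (bl q)) scalerDl scalerA.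
apply: tens_ind; first exact: tsubsp_subspace.
  by move=> a x y; rewrite hS opprD addrACA scalerBr.
move=> v w; have [h1 h2] := bilin_tmul V W.
have -> : tmul v w - \sum_(q : T1 * T2) (lift (fun a b => al q.1 a * be q.2 b)
      (tmul v w) : k) *: tmul (xs q.1) (ys q.2) =
    tmul (v - \sum_i (al i v : k) *: xs i) w +
    tmul (\sum_i (al i v : k) *: xs i) (w - \sum_j (be j w : k) *: ys j).
  rewrite (linB (h1 w)) (linB (h2 _)) addrA subrK; congr (_ - _).
  rewrite tmul_suml; under [RHS]eq_bigr => i _ do rewrite tmulZl tmul_sumr scaler_sumr.
  rewrite pair_bigA /=; apply: eq_bigr => q _.
  by rewrite tmulZr lift_tmul_scalar // scalerA.
by apply: tsubspD; apply: tsubsp_tmul; [left|right]; [exact: hdI | exact: hdJ].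
Qed.

Lemma continuous_tsubsp V W V' W' (mV : V -> V -> V) (mW : W -> W -> W)
    (mV' : V' -> V' -> V') (mW' : W' -> W' -> W') (f : tens V W -> tens V' W') :
  lcontinuous (tens_open (cof_open mV) (cof_open mW))
              (tens_open (cof_open mV') (cof_open mW')) f ->
  forall I J, cof_ideal mV' I -> cof_ideal mW' J ->
  exists I1 J1, [/\ cof_ideal mV I1, cof_ideal mW J1 &
    forall v w, I1 v \/ J1 w -> tsubsp I J (f (tmul v w))].
Proof.
move=> hc I J hI hJ.
have op : tens_open (cof_open mV') (cof_open mW') (tsubsp I J).
  split; first by apply: tsubsp_subspace; [case: hI => [[]] | case: hJ => [[]]].
  by exists I, J; split=> //; apply: cof_open_ideal.
have [_ [E0 [F0 [[_ [I1 [hI1 s1]]] [_ [J1 [hJ1 s2]]] h]]]] := hc _ op.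
exists I1, J1; split=> // v w hvw; apply: h; apply: tsubsp_tmul.
by case: hvw => [/s1|/s2]; [left|right].
Qed.

Section Algebra.
Variables (V : lmodType k) (m : V -> V -> V) (u : V).
Hypothesis hm : is_algebra m u.

Lemma alg_linr x : lin (m x). Proof. by case: hm. Qed.
Lemma alg_linl y : lin (fun x => m x y). Proof. by case: hm. Qed.
Lemma alg_mulA x y z : m x (m y z) = m (m x y) z. Proof. by case: hm. Qed.
Lemma alg_mul1l x : m u x = x. Proof. by case: hm. Qed.
Lemma alg_mul1r x : m x u = x. Proof. by case: hm. Qed.

(* The ideal is [{z | F (z2 i * z * z1 j) = 0 for all i, j}]. *)
Lemma absorbing_kernel_cof_ideal (F : V -> k^o) (T1 T2 : finType)
    (z1 : T1 -> V) (c1 : T1 -> V -> k) (z2 : T2 -> V) (c2 : T2 -> V -> k)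
    (P1 P2 : V -> Prop) :
  lin F ->
  (forall x, P1 (x - \sum_i c1 i x *: z1 i)) ->
  (forall x, P2 (x - \sum_i c2 i x *: z2 i)) ->
  (forall x y, P1 y -> F (m x y) = 0) ->
  (forall x y, P2 x -> F (m x y) = 0) ->
  exists I, cof_ideal m I /\ forall x, I x -> F x = 0.
Proof.
move=> hF hd1 hd2 hP1 hP2.
pose K (z : V) := forall q : T2 * T1, F (m (m (z2 q.1) z) (z1 q.2)) = 0.
have sandwich z : K z -> forall x y, F (m (m x z) y) = 0.
  move=> hz x y.
  rewrite -(subrK (\sum_j c1 j y *: z1 j) y) (linD (alg_linr _)) (linD hF).
  rewrite hP1 // add0r (lin_sum (alg_linr _)) (lin_sum hF) big1 // => j _.
  rewrite (linZ (alg_linr _)) (linZ hF).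
  rewrite -(subrK (\sum_i c2 i x *: z2 i) x) (linD (alg_linl _)) (linD (alg_linl _)).
  rewrite (linD hF) -alg_mulA hP2 // add0r (lin_sum (alg_linl _)) (lin_sum (alg_linl _)).
  rewrite (lin_sum hF) big1 ?scaler0 // => i _.
  by rewrite (linZ (alg_linl _)) (linZ (alg_linl _)) (linZ hF) (hz (i, j)) scaler0.
have lK (q : T2 * T1) : lin (fun z => F (m (m (z2 q.1) z) (z1 q.2)) : k^o).
  exact: lin_comp hF (lin_comp (alg_linl _) (alg_linr _)).
exists K; split; last by move=> x /sandwich /(_ u u); rewrite alg_mul1l alg_mul1r.
split; last exact: fin_codim_kernels lK.
split; first exact: subspace_kernels lK.
move=> x y hy; split=> q; first by rewrite alg_mulA; apply: sandwich.
by rewrite alg_mulA -alg_mulA; apply: sandwich.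
Qed.

End Algebra.

Section FinDualBialgebra.
Variables (V : lmodType k) (HV : bialg_ops V).
Hypothesis hV : is_bialgebra HV.
Local Notation m := (bmul HV).
Local Notation d := (bcomul HV).
Local Notation e := (bcounit HV).

Lemma bialg_alg : is_algebra m (bone HV). Proof. by case: hV. Qed.
Lemma bialg_comul_lin : lin d. Proof. by case: hV => _ []. Qed.
Lemma bialg_counit_lin : lin (e : V -> k^o). Proof. by case: hV => _ []. Qed.
Lemma bialg_comulM x y : d (m x y) = tens_alg_mul m m (d x) (d y).
Proof. by case: hV => _ _ []. Qed.
Lemma bialg_counitM x y : e (m x y) = e x * e y.
Proof. by case: hV => _ _ []. Qed.

Definition convolution (f g : V -> k) (x : V) : k := lift (fun x1 x2 => f x1 * g x2) (d x).

Section Convolution.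
Variables (f g : V -> k^o).
Hypotheses (hf : lin f) (hg : lin g).

Lemma convolution_lin : lin (convolution f g : V -> k^o).
Proof. exact: lin_comp (lift_lin_scalar (bilin_mul hf hg)) bialg_comul_lin. Qed.

Lemma convolutionM x y : convolution f g (m x y) =
  lift (fun a b => lift (fun a' b' => f (m a a') * g (m b b')) (d y)) (d x).
Proof.
have bfg := bilin_mul hf hg.
rewrite /convolution bialg_comulM /tens_alg_mul lift_lift_scalar //.
apply: eq_lift => a b; rewrite lift_lift_scalar //.
by apply: eq_lift => a' b'; rewrite lift_tmul_scalar.
Qed.

Lemma convolution_expand (I : V -> Prop) r (xs : 'I_r -> V) (al : 'I_r -> findual m) x :
  (forall y, I y -> f y = 0) -> (forall y, I y -> g y = 0) ->
  (forall y, I (y - \sum_j fdval (al j) y *: xs j)) ->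
  convolution f g x =
  \sum_i \sum_j f (xs i) * g (xs j) * convolution (fdval (al i)) (fdval (al j)) x.
Proof.
move=> vf vg hd.
have ex (h : V -> k^o) : lin h -> (forall y, I y -> h y = 0) ->
    forall v, h v = \sum_i fdval (al i) v * h (xs i).
move=> hh vh v.
  exact: (@vanishing_expand _ I h _ xs (fun j y => fdval (al j) y) v hh vh (hd v)).
rewrite /convolution (eq_lift (b' := fun v w => \sum_i \sum_j
    f (xs i) * g (xs j) * (fdval (al i) v * fdval (al j) w))); last first.
  move=> v w; rewrite (ex f) // (ex g) // mulr_suml; apply: eq_bigr => i _.
  by rewrite mulr_sumr; apply: eq_bigr => j _; ring.
rewrite lift_sum; apply: eq_bigr => i _.
by rewrite lift_sum; apply: eq_bigr => j _; rewrite lift_mull.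
Qed.

End Convolution.

Lemma convolution_findual (f g : findual m) :
  (convolution (fdval f) (fdval g) : V -> k^o) \in is_findual m.
Proof.
have [I [hI hv]] := findual_common_ideal [:: f; g].
have [r [xs [al [hal hd]]]] := cof_ideal_coordinates hI.
have [[_ iI] _] := hI.
pose K x := forall q : 'I_r * 'I_r, convolution (fdval (al q.1)) (fdval (al q.2)) x = 0.
have K_vanish (h1 h2 : V -> k^o) x : lin h1 -> lin h2 ->
    (forall y, I y -> h1 y = 0) -> (forall y, I y -> h2 y = 0) ->
    K x -> convolution h1 h2 x = 0.
  move=> l1 l2 v1 v2 hx; rewrite (convolution_expand l1 l2 _ v1 v2 hd).
  by rewrite big1 // => i _; rewrite big1 // => j _; rewrite (hx (i, j)) mulr0.
have lK (q : 'I_r * 'I_r) : lin (convolution (fdval (al q.1)) (fdval (al q.2)) : V -> k^o).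
  exact: convolution_lin (fdval_lin _) (fdval_lin _).
have linl z (h : findual m) : lin (fun a => fdval h (m a z)).
  exact: lin_comp (fdval_lin h) (alg_linl bialg_alg z).
have linr z (h : findual m) : lin (fun a => fdval h (m z a)).
  exact: lin_comp (fdval_lin h) (alg_linr bialg_alg z).
have vanl z i y : I y -> fdval (al i) (m y z) = 0.
  by move=> hy; apply: hal; case: (iI z y hy).
have vanr z i y : I y -> fdval (al i) (m z y) = 0.
  by move=> hy; apply: hal; case: (iI z y hy).
apply: findualP; first exact: convolution_lin (fdval_lin f) (fdval_lin g).
exists K; split; last first.
  by move=> x; apply: K_vanish (fdval_lin f) (fdval_lin g) _ _ => y hy;
    apply: (hv _ _ y hy); rewrite !inE eqxx ?orbT.
split; last exact: fin_codim_kernels lK.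
split; first exact: subspace_kernels lK.
move=> x y hy; split=> q; rewrite (convolutionM (fdval_lin _) (fdval_lin _)).
  rewrite -[RHS](lift0 _ (d x)); apply: eq_lift => a b.
  exact: (K_vanish (fun z => fdval (al q.1) (m a z)) (fun z => fdval (al q.2) (m b z)) y
    (linr a _) (linr b _) (vanr a _) (vanr b _) hy).
rewrite exchange_lift -[RHS](lift0 _ (d x)); apply: eq_lift => a' b'.
exact: (K_vanish (fun z => fdval (al q.1) (m z a')) (fun z => fdval (al q.2) (m z b')) y
  (linl a' _) (linl b' _) (vanl a' _) (vanl b' _) hy).
Qed.

Lemma counit_findual : (e : V -> k^o) \in is_findual m.
Proof.
apply: findualP; first exact: bialg_counit_lin.
exists (fun x => e x = 0); split => //; split.
  split; first by split=> [|a x y hx hy]; rewrite ?(linf0 bialg_counit_lin) //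
    bialg_counit_lin hx hy scaler0 addr0.
  by move=> x y hy; rewrite !bialg_counitM hy mulr0 mul0r.
exists 1%N, (fun x => \row_(j < 1) e x); split.
  by move=> a x y; apply/rowP => j; rewrite !mxE bialg_counit_lin.
move=> x; split; first by move=> h; apply/rowP => j; rewrite !mxE h.
by move/rowP => /(_ ord0); rewrite !mxE.
Qed.

Lemma fd_mulE (f g : findual m) x :
  fdval (bmul (fd_ops HV) f g) x = convolution (fdval f) (fdval g) x.
Proof. by rewrite /= insubdK //; apply: convolution_findual. Qed.

Lemma fd_oneE x : fdval (bone (fd_ops HV)) x = e x.
Proof. by rewrite /= insubdK //; apply: counit_findual. Qed.

Lemma fd_comulE (f : findual m) x y :
  dpair (bcomul (fd_ops HV) f) x y = fdval f (m x y).
Proof.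
rewrite /=; set P := (fun T => _); suff : P (xget 0 P) by apply.
apply: xgetPex.
have [J [hJ hv]] := fdval_vanishing f; have [[_ iJ] _] := hJ.
apply: (dpair_represent (b := fun x y => fdval f (m x y) : k^o) _ hJ hJ).
- split=> [w|v]; apply: lin_comp (fdval_lin f) _;
    [exact: alg_linl bialg_alg w | exact: alg_linr bialg_alg v].
- by move=> a b ha; apply: hv; case: (iJ b a ha).
- by move=> a b hb; apply: hv; case: (iJ a b hb).
Qed.

End FinDualBialgebra.

Lemma sum_regroup3 (T1 T2 T3 : Type) (r1 : seq T1) (r2 : seq T2) (r3 : seq T3)
    (f1 : T1 -> k) (g1 : T1 -> T3 -> k) (f2 : T2 -> T3 -> k) (g2 : T2 -> k) :
  \sum_(p <- r1) \sum_(q <- r2) f1 p * g2 q * \sum_(r <- r3) g1 p r * f2 q r =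
  \sum_(r <- r3) (\sum_(p <- r1) f1 p * g1 p r) * (\sum_(q <- r2) f2 q r * g2 q).
Proof.
transitivity (\sum_(p <- r1) \sum_(q <- r2) \sum_(r <- r3)
    f1 p * g1 p r * (f2 q r * g2 q)).
  apply: eq_bigr => p _; apply: eq_bigr => q _; rewrite mulr_sumr.
  by apply: eq_bigr => r _; ring.
symmetry; rewrite (eq_bigr (fun r => \sum_(p <- r1) \sum_(q <- r2)
    f1 p * g1 p r * (f2 q r * g2 q))); last first.
  by move=> r _; rewrite mulr_suml; apply: eq_bigr => p _; rewrite mulr_sumr.
by rewrite exchange_big /=; apply: eq_bigr => p _; rewrite exchange_big.
Qed.

Lemma sum_regroup5 (T1 T2 T3 T4 T5 : Type) (r1 : seq T1) (r2 : seq T2) (r3 : seq T3)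
    (r4 : seq T4) (r5 : T3 -> T4 -> seq T5) (f1 : T1 -> T3 -> k) (g1 : T1 -> T5 -> k)
    (f2 : T2 -> T5 -> k) (g2 : T2 -> T4 -> k) :
  \sum_(s <- r1) \sum_(s' <- r2) \sum_(p <- r3) \sum_(q <- r4)
     f1 s p * g2 s' q * \sum_(r <- r5 p q) g1 s r * f2 s' r =
  \sum_(p <- r3) \sum_(q <- r4) \sum_(r <- r5 p q)
     (\sum_(s <- r1) f1 s p * g1 s r) * (\sum_(s' <- r2) f2 s' r * g2 s' q).
Proof.
transitivity (\sum_(p <- r3) \sum_(q <- r4) \sum_(r <- r5 p q) \sum_(s <- r1)
    \sum_(s' <- r2) f1 s p * g1 s r * (f2 s' r * g2 s' q)); last first.
  apply: eq_bigr => p _; apply: eq_bigr => q _; apply: eq_bigr => r _.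
  by rewrite mulr_suml; apply: eq_bigr => s _; rewrite mulr_sumr.
transitivity (\sum_(s <- r1) \sum_(s' <- r2) \sum_(p <- r3) \sum_(q <- r4)
    \sum_(r <- r5 p q) f1 s p * g1 s r * (f2 s' r * g2 s' q)).
  apply: eq_bigr => s _; apply: eq_bigr => s' _; apply: eq_bigr => p _.
  apply: eq_bigr => q _; rewrite mulr_sumr.
  by apply: eq_bigr => r _; ring.
transitivity (\sum_(s <- r1) \sum_(p <- r3) \sum_(q <- r4) \sum_(r <- r5 p q)
    \sum_(s' <- r2) f1 s p * g1 s r * (f2 s' r * g2 s' q)).
  apply: eq_bigr => s _; rewrite exchange_big /=; apply: eq_bigr => p _.
  by rewrite exchange_big /=; apply: eq_bigr => q _; rewrite exchange_big.
rewrite exchange_big /=; apply: eq_bigr => p _.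
by rewrite exchange_big /=; apply: eq_bigr => q _; rewrite exchange_big.
Qed.

Lemma lift_regroup3 V1 W1 V2 W2 V3 W3 (t1 : tens V1 W1) (t2 : tens V2 W2)
    (t3 : tens V3 W3) (f1 : V1 -> k) (g1 : W1 -> V3 -> k) (f2 : V2 -> W3 -> k)
    (g2 : W2 -> k) :
  lift (fun v1 w1 => lift (fun v2 w2 => f1 v1 * g2 w2 *
      lift (fun v3 w3 => g1 w1 v3 * f2 v2 w3) t3) t2) t1 =
  lift (fun v3 w3 => lift (fun v1 w1 => f1 v1 * g1 w1 v3) t1 *
      lift (fun v2 w2 => f2 v2 w3 * g2 w2) t2) t3.
Proof.
exact: (sum_regroup3 (trep t1) (trep t2) (trep t3) (fun p => f1 p.1)
  (fun p r => g1 p.2 r.1) (fun q r => f2 q.1 r.2) (fun q => g2 q.2)).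
Qed.

Lemma lift_regroup5 V1 W1 V2 W2 V3 W3 V4 W4 V5 W5 (t1 : tens V1 W1)
    (t2 : tens V2 W2) (t3 : tens V3 W3) (t4 : tens V4 W4) (t5 : W3 -> V4 -> tens V5 W5)
    (f1 : V1 -> V3 -> k) (g1 : W1 -> V5 -> k) (f2 : V2 -> W5 -> k) (g2 : W2 -> W4 -> k) :
  lift (fun v1 w1 => lift (fun v2 w2 => lift (fun v3 w3 => lift (fun v4 w4 =>
     f1 v1 v3 * g2 w2 w4 * lift (fun v5 w5 => g1 w1 v5 * f2 v2 w5) (t5 w3 v4))
     t4) t3) t2) t1 =
  lift (fun v3 w3 => lift (fun v4 w4 => lift (fun v5 w5 =>
     lift (fun v1 w1 => f1 v1 v3 * g1 w1 v5) t1 *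
     lift (fun v2 w2 => f2 v2 w5 * g2 w2 w4) t2) (t5 w3 v4)) t4) t3.
Proof.
exact: (sum_regroup5 (trep t1) (trep t2) (trep t3) (trep t4)
  (fun p q => trep (t5 p.2 q.1)) (fun s p => f1 s.1 p.1) (fun s r => g1 s.2 r.1)
  (fun s' r => f2 s'.1 r.2) (fun s' q => g2 s'.2 q.2)).
Qed.

(* The transpose [f^o] exists because continuity makes [T o f] vanish on
   [I1 (x) V + W (x) J1] for cofinite ideals [I1], [J1]. *)
Lemma dual_twistP V W (mV : V -> V -> V) (mW : W -> W -> W)
    (f : tens W V -> tens V W) :
  lin f ->
  lcontinuous (tens_open (cof_open mW) (cof_open mV))
              (tens_open (cof_open mV) (cof_open mW)) f ->
  forall (T : tens (findual mV) (findual mW)) b a,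
  dpair (dual_twist f T) b a = dpairT T (f (tmul b a)).
Proof.
move=> lf hc T b a; rewrite /dual_twist; set P := (fun S => _).
suff : P (xget 0 P) by apply.
apply: xgetPex.
have [I [J [hI hJ hv]]] := dpair_vanishing T.
have [I1 [J1 [hI1 hJ1 hc1]]] := continuous_tsubsp hc hI hJ.
have [t1 t2] := bilin_tmul W V.
have vT u : tsubsp I J u -> dpairT T u = 0.
  apply: (tsubsp_ind (P := fun z : k^o => z = 0)); [exact: subspace_zero |
    exact: dpairT_lin | move=> x y hxy; rewrite dpairT_tmul; exact: hv].
apply: (dpair_represent (b := fun b a => dpairT T (f (tmul b a)) : k^o) _ hI1 hJ1).
- by split=> [w|v]; apply: lin_comp (dpairT_lin T) (lin_comp lf _).
- by move=> x y hx; apply: vT; apply: hc1; left.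
- by move=> x y hy; apply: vT; apply: hc1; right.
Qed.

Section BitwistedDual.
Variables (A B : lmodType k) (HA : bialg_ops A) (HB : bialg_ops B)
  (tau : tens B A -> tens A B) (phi : tens A B -> tens B A).
Hypotheses (hA : is_bialgebra HA) (hB : is_bialgebra HB)
  (htw : is_twisting (bmul HA) (bone HA) (bmul HB) (bone HB) tau)
  (hctw : is_cotwisting (bcomul HA) (bcounit HA) (bcomul HB) (bcounit HB) phi)
  (hH : is_bialgebra (bitwisted HA HB tau phi)).
Local Notation mA := (bmul HA).
Local Notation mB := (bmul HB).
Local Notation uA := (bone HA).
Local Notation uB := (bone HB).
Local Notation dA := (bcomul HA).
Local Notation dB := (bcomul HB).
Local Notation H := (bitwisted HA HB tau phi).
Local Notation mH := (bmul H).

Let hAalg := bialg_alg hA.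
Let hBalg := bialg_alg hB.
Let hHalg := bialg_alg hH.

Lemma twist_lin : lin tau. Proof. by case: htw. Qed.
Lemma cotwist_lin : lin phi. Proof. by case: hctw. Qed.

Lemma twisted_mul_tmul a b a' b' :
  mH (tmul a b) (tmul a' b') = tmap (mA a) (fun y => mB y b') (tau (tmul b a')).
Proof.
pose G x y x' y' := tmap (mA x) (fun z => mB z y') (tau (tmul y x')).
have [t1 t2] := bilin_tmul B A.
have tmapl x y : lin (tmap (mA x) (fun z => mB z y)).
  exact: tmap_lin (alg_linr hAalg x) (alg_linl hBalg y).
have lG1 y x' y' : lin (fun x => G x y x' y').
  apply: lift_lin_param => v w.
  exact: lin_comp (proj1 (bilin_tmul _ _) _) (alg_linl hAalg v).
have lG2 x x' y' : lin (fun y => G x y x' y').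
  exact: lin_comp (tmapl x y') (lin_comp twist_lin (t1 x')).
have lG3 x y y' : lin (fun x' => G x y x' y').
  exact: lin_comp (tmapl x y') (lin_comp twist_lin (t2 y)).
have lG4 x y x' : lin (fun y' => G x y x' y').
  apply: lift_lin_param => v w.
  exact: lin_comp (proj2 (bilin_tmul _ _) _) (alg_linr hBalg w).
have bG x y : bilin (G x y) by split=> [w|v]; [apply: lG3 | apply: lG4].
have bG' : bilin (fun x y => lift (G x y) (tmul a' b')).
  by split=> [w|v]; apply: lift_lin_param => x0 y0; [apply: lG1 | apply: lG2].
rewrite /= /twisted_mul (lift_tmul bG' (@dual_separating_tens _ _)).
exact: lift_tmul (bG a b) (@dual_separating_tens _ _) a' b'.
Qed.

Lemma tmap_unit_id t : tmap (mA uA) (fun y => mB y uB) t = t.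
Proof. by apply: tmap_id => v; [exact: (alg_mul1l hAalg) | exact: (alg_mul1r hBalg)]. Qed.

Lemma twist_unitl a : tau (tmul uB a) = tmul a uB.
Proof.
by have := alg_mul1l hHalg (tmul a uB); rewrite [bone _]/= twisted_mul_tmul tmap_unit_id.
Qed.

Lemma twist_unitr b : tau (tmul b uA) = tmul uA b.
Proof.
by have := alg_mul1r hHalg (tmul uA b); rewrite [bone _]/= twisted_mul_tmul tmap_unit_id.
Qed.

Lemma tmul_factor a b : tmul a b = mH (tmul a uB) (tmul uA b).
Proof.
rewrite twisted_mul_tmul twist_unitl tmap_tmul ?(alg_mul1r hAalg) ?(alg_mul1l hBalg) //.
  exact: (alg_linr hAalg a).
exact: (alg_linl hBalg b).
Qed.

Lemma mul_tmul_1 x a : mH (tmul x uB) (tmul a uB) = tmul (mA x a) uB.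
Proof.
rewrite twisted_mul_tmul twist_unitl tmap_tmul ?(alg_mul1r hBalg) //.
  exact: (alg_linr hAalg x).
exact: (alg_linl hBalg uB).
Qed.

Lemma mul_1_tmul y b : mH (tmul uA y) (tmul uA b) = tmul uA (mB y b).
Proof.
rewrite twisted_mul_tmul twist_unitr tmap_tmul ?(alg_mul1r hAalg) //.
  exact: (alg_linr hAalg uA).
exact: (alg_linl hBalg b).
Qed.

Lemma findual_tens_vanishing (F : findual mH) : exists I J,
  [/\ cof_ideal mA I, cof_ideal mB J &
      forall a b, I a \/ J b -> fdval F (tmul a b) = 0].
Proof.
have [K [hK hv]] := fdval_vanishing F; have [[_ iK] _] := hK.
have [t1 t2] := bilin_tmul A B.
exists (fun a => K (tmul a uB)), (fun b => K (tmul uA b)); split.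
- exact: cof_ideal_preim (t1 uB) (fun x y => esym (mul_tmul_1 x y)) hK.
- exact: cof_ideal_preim (t2 uA) (fun x y => esym (mul_1_tmul x y)) hK.
move=> a b h; apply: hv; rewrite tmul_factor.
by case: h => h; [case: (iK (tmul uA b) _ h) | case: (iK (tmul a uB) _ h)].
Qed.

Section Absorption.
Variables (I IA : A -> Prop) (J JB : B -> Prop).
Hypotheses (hI : two_sided_ideal mA I) (hJ : two_sided_ideal mB J).
Hypothesis htau : forall b a, JB b \/ IA a -> tsubsp I J (tau (tmul b a)).

Lemma twisted_mul_tmul_tsubsp x y a b : (JB y \/ IA a) \/ J b \/ I x ->
  tsubsp I J (mH (tmul x y) (tmul a b)).
Proof.
have [_ iI] := hI; have [_ iJ] := hJ.
rewrite twisted_mul_tmul; case=> [/htau hyx|[hb|hx]].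
- apply: tsubsp_tmap hyx.
  + exact: (alg_linr hAalg x).
  + exact: (alg_linl hBalg b).
  + by move=> v hv; case: (iI x v hv).
  + by move=> w hw; case: (iJ b w hw).
- by apply: tsubsp_tmapr => w; case: (iJ w b hb).
- by apply: tsubsp_tmapl => v; case: (iI v x hx).
Qed.

Lemma twisted_mul_tsubspl u w : tsubsp IA J w -> tsubsp I J (mH u w).
Proof.
have sIJ := tsubsp_subspace hI.1 hJ.1.
apply: tsubsp_ind (alg_linr hHalg u) _ => // a b hab.
apply: (tens_ind (Phi := fun u => mH u (tmul a b))) => // [|x y].
  exact: (alg_linl hHalg (tmul a b)).
by apply: twisted_mul_tmul_tsubsp; case: hab; auto.
Qed.

Lemma twisted_mul_tsubspr w u : tsubsp I JB w -> tsubsp I J (mH w u).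
Proof.
have sIJ := tsubsp_subspace hI.1 hJ.1.
apply: tsubsp_ind (alg_linl hHalg u) _ => // x y hxy.
apply: (tens_ind (Phi := fun u => mH (tmul x y) u)) => // [|a b].
  exact: (alg_linr hHalg (tmul x y)).
by apply: twisted_mul_tmul_tsubsp; case: hxy; auto.
Qed.

End Absorption.

Hypothesis tau_cont : lcontinuous (tens_open (cof_open mB) (cof_open mA))
                                  (tens_open (cof_open mA) (cof_open mB)) tau.

Lemma tens_functional_findual (F : tens A B -> k^o) I J :
  lin F -> cof_ideal mA I -> cof_ideal mB J ->
  (forall a b, I a \/ J b -> F (tmul a b) = 0) -> F \in is_findual mH.
Proof.
move=> lF hI hJ hF.
have [JB [IA [hJB hIA hc]]] := continuous_tsubsp tau_cont hI hJ.
have vanF u : tsubsp I J u -> F u = 0.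
  by apply: (tsubsp_ind (P := fun z : k^o => z = 0)) => //; exact: subspace_zero.
have [rI [xI [aI [_ dI]]]] := cof_ideal_coordinates hI.
have [rJ [yJ [bJ [_ dJ]]]] := cof_ideal_coordinates hJ.
have [rIA [xIA [aIA [_ dIA]]]] := cof_ideal_coordinates hIA.
have [rJB [yJB [bJB [_ dJB]]]] := cof_ideal_coordinates hJB.
have [[sI _] _] := hI; have [[sJ _] _] := hJ.
have [[sIA _] _] := hIA; have [[sJB _] _] := hJB.
apply: findualP => //.
apply: (absorbing_kernel_cof_ideal hHalg lF
  (tsubsp_coordinates sIA sJ (fun _ => fdval_lin _) (fun _ => fdval_lin _) dIA dJ)
  (tsubsp_coordinates sI sJB (fun _ => fdval_lin _) (fun _ => fdval_lin _) dI dJB)).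
  by move=> x y /(twisted_mul_tsubspl hI.1 hJ.1 hc) /vanF.
by move=> x y /(twisted_mul_tsubspr hI.1 hJ.1 hc) /vanF.
Qed.

Definition split_dual (F : findual mH) : tens (findual mA) (findual mB) :=
  xget 0 (fun T => forall a b, dpair T a b = fdval F (tmul a b)).

Lemma split_dualP F a b : dpair (split_dual F) a b = fdval F (tmul a b).
Proof.
rewrite /split_dual; set P := (fun T => _); suff : P (xget 0 P) by apply.
apply: xgetPex.
have [I [J [hI hJ hv]]] := findual_tens_vanishing F.
have [t1 t2] := bilin_tmul A B.
apply: (dpair_represent (b := fun a b => fdval F (tmul a b) : k^o) _ hI hJ).
- by split=> [w|v]; apply: lin_comp (fdval_lin F) _.
- by move=> x y hx; apply: hv; left.
- by move=> x y hy; apply: hv; right.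
Qed.

Lemma join_dual_findual (T : tens (findual mA) (findual mB)) :
  (fun u => dpairT T u : k^o) \in is_findual mH.
Proof.
have [I [J [hI hJ hv]]] := dpair_vanishing T.
apply: (tens_functional_findual (dpairT_lin T) hI hJ) => a b hab.
by rewrite dpairT_tmul; apply: hv.
Qed.

Definition join_dual (T : tens (findual mA) (findual mB)) : findual mH :=
  FinDual (join_dual_findual T).

Lemma split_dual_lin : lin split_dual.
Proof.
move=> c F G; apply: dpair_inj => a b.
by rewrite (dpair_lin a b) !split_dualP fdvalD fdvalZ.
Qed.

Lemma split_dual_inj : injective split_dual.
Proof.
move=> F G e; apply: findual_ext => u; apply/eqP; rewrite -subr_eq0; apply/eqP.
apply: (tens_ind (P := fun z : k^o => z = 0) (Phi := fun u => fdval F u - fdval G u : k^o)).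
- exact: subspace_zero.
- by move=> a x y; rewrite !(fdval_lin F) !(fdval_lin G) /GRing.scale /=; ring.
- by move=> v w; rewrite -!split_dualP e subrr.
Qed.

Lemma join_dualK : cancel join_dual split_dual.
Proof. by move=> T; apply: dpair_inj => a b; rewrite split_dualP /= dpairT_tmul. Qed.

Lemma split_dual_bij : bijective split_dual.
Proof.
exists join_dual => [F|T]; last exact: join_dualK.
by apply: split_dual_inj; rewrite join_dualK.
Qed.

Hypothesis phi_cont : lcontinuous (tens_open (cof_open mA) (cof_open mB))
                                  (tens_open (cof_open mB) (cof_open mA)) phi.

Local Notation D := (dual_bitwisted HA HB tau phi).

Lemma dual_cotwistP (T : tens (findual mB) (findual mA)) a b :
  dpair (dual_twist phi T) a b = dpairT T (phi (tmul a b)).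
Proof. exact: dual_twistP cotwist_lin phi_cont T a b. Qed.

Lemma dual_twist_tauP (T : tens (findual mA) (findual mB)) b a :
  dpair (dual_twist tau T) b a = dpairT T (tau (tmul b a)).
Proof. exact: dual_twistP twist_lin tau_cont T b a. Qed.

Lemma split_dual_one : split_dual (bone (fd_ops H)) = bone D.
Proof.
apply: dpair_inj => a b; rewrite split_dualP (fd_oneE hH) /= dpair_tmul !fd_oneE //.
by rewrite /tcounit lift_tmul_scalar //; apply: bilin_mul; apply: bialg_counit_lin.
Qed.

Lemma split_dual_counit F : bcounit D (split_dual F) = bcounit (fd_ops H) F.
Proof. by rewrite /= /tcounit -split_dualP. Qed.

Let ev := tens_pairing (@fd_eval A mA) (@fd_eval B mB).
Let ev_lin : lin_pairing ev := tens_pairing_lin (@fd_eval_lin _ _) (@fd_eval_lin _ _).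

Lemma dual_cotwisted_comul_eval (f : findual mA) (g : findual mB) a b a' b' :
  tens_pairing ev ev (lift (fun f1 f2 => lift (fun g1 g2 =>
      lift (fun y x => tmul (tmul f1 y) (tmul x g2)) (dual_twist tau (tmul f2 g1)))
    (bcomul (fd_ops HB) g)) (bcomul (fd_ops HA) f)) ((a, b), (a', b'))
  = lift (fun x y => fdval f (mA a x) * fdval g (mB y b')) (tau (tmul b a')).
Proof.
rewrite (tens_pairing_lift ev_lin ev_lin).
under eq_lift => f1 f2.
  rewrite (tens_pairing_lift ev_lin ev_lin).
  under eq_lift => g1 g2.
    rewrite (tens_pairing_lift ev_lin ev_lin).
    under eq_lift => y x do
      rewrite (tens_pairing_tmul ev_lin ev_lin) /= /ev !tens_pairing_tmul //= /fd_eval.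
    rewrite (eq_lift (b' := fun y x => fdval f1 a * fdval g2 b' * (fdval y b * fdval x a')));
      last by move=> y x; ring.
    rewrite lift_mull -/(dpair _ b a') dual_twist_tauP /dpairT.
    under eq_lift => x y do rewrite dpair_tmul.
    over.
  over.
under [RHS]eq_lift => x y do rewrite -(fd_comulE hA) -(fd_comulE hB).
exact: lift_regroup3.
Qed.

Lemma split_dual_comul F :
  tmap split_dual split_dual (bcomul (fd_ops H) F) = bcomul D (split_dual F).
Proof.
apply: (local_dual_bases_inj (ev := tens_pairing ev ev)).
  by do 2!apply: tens_pairing_local_dual_bases; exact: findual_local_dual_bases.
case=> [[a b] [a' b']].
rewrite /tmap (tens_pairing_lift ev_lin ev_lin).
rewrite (eq_lift (b' := fun S S' => fdval S (tmul a b) * fdval S' (tmul a' b'))); last first.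
  by move=> S S'; rewrite (tens_pairing_tmul ev_lin ev_lin) /= /ev -!dpairE !split_dualP.
rewrite -/(dpair _ (tmul a b) (tmul a' b')) (fd_comulE hH) twisted_mul_tmul /tmap fdval_lift.
rewrite /= /cotwisted_comul (tens_pairing_lift ev_lin ev_lin).
rewrite (eq_lift (b' := fun (f : findual mA) (g : findual mB) =>
   lift (fun x y => fdval f (mA a x) * fdval g (mB y b')) (tau (tmul b a')))); last first.
  by move=> f g; apply: dual_cotwisted_comul_eval.
by rewrite exchange_lift; apply: eq_lift => x y; rewrite -split_dualP.
Qed.

Lemma cotwisted_comul_tmul a b : bcomul H (tmul a b) =
  lift (fun a1 a2 => lift (fun b1 b2 =>
    lift (fun y x => tmul (tmul a1 y) (tmul x b2)) (phi (tmul a2 b1))) (dB b)) (dA a).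
Proof.
have [t1 t2] := bilin_tmul A B; have [t1' t2'] := bilin_tmul (tens A B) (tens A B).
have sT := @dual_separating_tens (tens A B) (tens A B).
pose Q3 (a1 a2 : A) (b1 b2 : B) :=
  lift (fun (y : B) (x : A) => tmul (tmul a1 y) (tmul x b2)) (phi (tmul a2 b1)).
pose Q2 (a1 a2 : A) (b : B) := lift (Q3 a1 a2) (dB b).
have bQ (a1 : A) (b2 : B) : bilin (fun (y : B) (x : A) => tmul (tmul a1 y) (tmul x b2)).
  by split=> [x|y]; [exact: lin_comp (t1' _) (t2 a1) | exact: lin_comp (t2' _) (t1 b2)].
have Q3a1 a2 b1 b2 : lin (fun a1 => Q3 a1 a2 b1 b2).
  by rewrite /Q3; apply: lift_lin_param => y x; exact: lin_comp (t1' _) (t1 y).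
have Q3b2 a1 a2 b1 : lin (fun b2 => Q3 a1 a2 b1 b2).
  by rewrite /Q3; apply: lift_lin_param => y x; exact: lin_comp (t2' _) (t2 x).
have Q3a2 a1 b1 b2 : lin (fun a2 => Q3 a1 a2 b1 b2).
  exact: lin_comp (lift_lin (bQ a1 b2) sT) (lin_comp cotwist_lin (t1 b1)).
have Q3b1 a1 a2 b2 : lin (fun b1 => Q3 a1 a2 b1 b2).
  exact: lin_comp (lift_lin (bQ a1 b2) sT) (lin_comp cotwist_lin (t2 a2)).
have Q2b a1 a2 : lin (Q2 a1 a2).
  exact: lin_comp (lift_lin (conj (Q3b1 a1 a2) (Q3b2 a1 a2)) sT) (bialg_comul_lin hB).
have Q2bil b0 : bilin (fun a1 a2 => Q2 a1 a2 b0).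
  by split=> [a2|a1]; rewrite /Q2; apply: lift_lin_param => b1 b2;
    [exact: Q3a1 | exact: Q3a2].
apply: (lift_tmul (b := fun a0 b0 => lift (fun a1 a2 => Q2 a1 a2 b0) (dA a0))) => //.
split=> [b0|a0]; first exact: lin_comp (lift_lin (Q2bil b0) sT) (bialg_comul_lin hA).
by apply: lift_lin_param => a1 a2; apply: Q2b.
Qed.

Lemma dual_twisted_mul_eval (f : findual mA) (g : findual mB) (f' : findual mA)
    (g' : findual mB) a b :
  dpair (tmap (bmul (fd_ops HA) f) (fun y => bmul (fd_ops HB) y g')
      (dual_twist phi (tmul g f'))) a b =
  lift (fun a1 a2 => lift (fun b1 b2 => fdval f a1 * fdval g' b2 *
      lift (fun y x => fdval g y * fdval f' x) (phi (tmul a2 b1))) (dB b)) (dA a).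
Proof.
transitivity (lift (fun u v => lift (fun a1 a2 => fdval f a1 * fdval u a2) (dA a) *
    lift (fun b1 b2 => fdval v b1 * fdval g' b2) (dB b)) (dual_twist phi (tmul g f'))).
  by rewrite /tmap dpair_lift; apply: eq_lift => u v; rewrite dpair_tmul !fd_mulE.
rewrite -lift_regroup3; apply: eq_lift => a1 a2; apply: eq_lift => b1 b2.
rewrite -/(dpair _ a2 b1) dual_cotwistP /dpairT; congr (_ * _).
by apply: eq_lift => y x; rewrite dpair_tmul.
Qed.

Lemma split_dual_mul F G :
  split_dual (bmul (fd_ops H) F G) = bmul D (split_dual F) (split_dual G).
Proof.
apply: dpair_inj => a b.
rewrite split_dualP (fd_mulE hH) /convolution cotwisted_comul_tmul.
have bFG := bilin_mul (fdval_lin F) (fdval_lin G).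
rewrite lift_lift_scalar //.
rewrite (eq_lift (b' := fun a1 a2 => lift (fun b1 b2 => lift (fun y x =>
   lift (fun (f : findual mA) (g : findual mB) => fdval f a1 * fdval g y) (split_dual F) *
   lift (fun (f' : findual mA) (g' : findual mB) => fdval f' x * fdval g' b2) (split_dual G))
   (phi (tmul a2 b1))) (dB b))); last first.
  move=> a1 a2; rewrite lift_lift_scalar //; apply: eq_lift => b1 b2.
  rewrite lift_lift_scalar //; apply: eq_lift => y x.
  by rewrite lift_tmul_scalar // -!split_dualP.
rewrite /= /twisted_mul dpair_lift.
rewrite (eq_lift (b' := fun f g => lift (fun f' g' => lift (fun a1 a2 => lift (fun b1 b2 =>
   fdval f a1 * fdval g' b2 * lift (fun y x => fdval g y * fdval f' x) (phi (tmul a2 b1)))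
   (dB b)) (dA a)) (split_dual G))); last first.
  by move=> f g; rewrite dpair_lift; apply: eq_lift => f' g'; apply: dual_twisted_mul_eval.
by rewrite lift_regroup5.
Qed.

End BitwistedDual.

End TensorDuality.

Theorem corollary4p6 (k : fieldType) (A B : lmodType k)
    (HA : bialg_ops A) (HB : bialg_ops B)
    (tau : tens B A -> tens A B) (phi : tens A B -> tens B A) :
  is_bialgebra HA ->
  is_bialgebra HB ->
  is_twisting (bmul HA) (bone HA) (bmul HB) (bone HB) tau ->
  is_cotwisting (bcomul HA) (bcounit HA) (bcomul HB) (bcounit HB) phi ->
  is_bialgebra (bitwisted HA HB tau phi) ->
  lcontinuous (tens_open (cof_open (bmul HB)) (cof_open (bmul HA)))
              (tens_open (cof_open (bmul HA)) (cof_open (bmul HB))) tau ->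
  lcontinuous (tens_open (cof_open (bmul HA)) (cof_open (bmul HB)))
              (tens_open (cof_open (bmul HB)) (cof_open (bmul HA))) phi ->
  exists Psi, bialg_iso (fd_ops (bitwisted HA HB tau phi))
                        (dual_bitwisted HA HB tau phi) Psi.
Proof.
move=> hA hB htw hctw hH htau hphi.
exists (@split_dual _ _ _ HA HB tau phi).
split; [exact: split_dual_lin | exact: split_dual_bij | split].
- exact: split_dual_mul.
- exact: split_dual_one.
- exact: split_dual_comul.
- exact: split_dual_counit.
Qed.
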